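(* Let $\mathbb{H}_1,\mathbb{H}_2$ be complex Hilbert spaces. Let $T\in \mathbb{L}(\mathbb{H}_1,\mathbb{H}_2)$ with $\|T\|=1$ be such that $\operatorname{dist}(T,\mathbb{K}(\mathbb{H}_1,\mathbb{H}_2))<1$. Then for $A\in \mathbb{L}(\mathbb{H}_1,\mathbb{H}_2)$, $T\perp_B A$ if and only if there exists $x\in M_T$ such that $\langle Ax,Tx\rangle=0$.
   Context: $\mathbb{L}(\mathbb{H}_1,\mathbb{H}_2)$ ($\mathbb{K}(\mathbb{H}_1,\mathbb{H}_2)$) is the space of bounded (compact) linear operators with the operator norm. $M_T=\{x\in\mathbb{H}_1:\|x\|=1,\ \|Tx\|=\|T\|\}$. Birkhoff–James orthogonality: $T\perp_B A$ means $\|T+\lambda A\|\geq \|T\|$ for every complex scalar $\lambda$. *)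

From HB Require Import structures.
From mathcomp Require Import all_boot all_order all_algebra.
From mathcomp Require Import boolp classical_sets reals.
From mathcomp Require Import complex.
Set Implicit Arguments.
Unset Strict Implicit.
Unset Printing Implicit Defensive.
Import Order.TTheory GRing.Theory Num.Theory.
Local Open Scope ring_scope.
Local Open Scope classical_set_scope.

Section Hilbert.
Variable R : realType.

Definition is_inner_product (V : lmodType R[i]) (ip : V -> V -> R[i]) : Prop :=
  [/\ (forall (a : R[i]) (x y z : V), ip (a *: x + y) z = a * ip x z + ip y z),
      (forall x y : V, ip y x = conjc (ip x y)),
      (forall x : V, 0 <= complex.Re (ip x x) /\ complex.Im (ip x x) = 0) &
      (forall x : V, ip x x = 0 -> x = 0)].

Definition ipnorm (V : lmodType R[i]) (ip : V -> V -> R[i]) (x : V) : R :=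
  Num.sqrt (complex.Re (ip x x)).

Definition converges_to (V : lmodType R[i]) (ip : V -> V -> R[i])
    (u : nat -> V) (l : V) : Prop :=
  forall e : R, 0 < e -> exists N : nat, forall n, (N <= n)%N ->
    ipnorm ip (u n - l) < e.

Definition cauchy_seq (V : lmodType R[i]) (ip : V -> V -> R[i])
    (u : nat -> V) : Prop :=
  forall e : R, 0 < e -> exists N : nat, forall m n, (N <= m)%N -> (N <= n)%N ->
    ipnorm ip (u m - u n) < e.

Definition is_hilbert (V : lmodType R[i]) (ip : V -> V -> R[i]) : Prop :=
  is_inner_product ip /\
  (forall u : nat -> V, cauchy_seq ip u -> exists l, converges_to ip u l).

Variables (V1 V2 : lmodType R[i]) (ip1 : V1 -> V1 -> R[i]) (ip2 : V2 -> V2 -> R[i]).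

Definition is_linear_op (T : V1 -> V2) : Prop :=
  forall (a : R[i]) (x y : V1), T (a *: x + y) = a *: T x + T y.

Definition bounded_op (T : V1 -> V2) : Prop :=
  is_linear_op T /\
  exists M : R, forall x : V1, ipnorm ip2 (T x) <= M * ipnorm ip1 x.

Definition compact_op (T : V1 -> V2) : Prop :=
  bounded_op T /\
  forall u : nat -> V1, (exists M : R, forall n, ipnorm ip1 (u n) <= M) ->
    exists (phi : nat -> nat) (l : V2),
      (forall n, (phi n < phi n.+1)%N) /\
      converges_to ip2 (fun n => T (u (phi n))) l.

Definition opnorm (T : V1 -> V2) : R :=
  sup [set ipnorm ip2 (T x) | x in [set x : V1 | ipnorm ip1 x = 1]].

Definition dist_compact (T : V1 -> V2) : R :=
  inf [set opnorm (fun x => T x - K x) | K in [set K | compact_op K]].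

Definition norm_attaining_set (T : V1 -> V2) : set V1 :=
  [set x | ipnorm ip1 x = 1 /\ ipnorm ip2 (T x) = opnorm T].

Definition bj_orth (T A : V1 -> V2) : Prop :=
  forall lambda : R[i], opnorm T <= opnorm (fun x => T x + lambda *: A x).

End Hilbert.

(* Since dist(T, K(H1,H2)) < 1, write T = K + (T - K) with K compact and
   c = ||T - K|| < 1.  For unit vectors u, v the parallelogram law and
   ||T|| = 1 give (1 - c^2) ||u - v||^2 <= 4 - 2||Tu||^2 - 2||Tv||^2 + O(||Ku - Kv||),
   so every norming sequence of T (unit x_n with ||T x_n|| -> 1) has a
   subsequence converging to a point of M_T.  Consequently the continuous
   function x |-> |<Ax, Tx>| attains its minimum on M_T.  If T is
   Birkhoff-James orthogonal to A, the inequalities ||T + t mu A|| >= 1 for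
   t -> 0+ produce, for every direction mu, norming sequences along which
   Re (mu <Ax, Tx>) >= -O(t), hence points y of M_T with Re (mu <Ay, Ty>) >= 0.
   Finally T is isometric on the span of two points of M_T, so the values
   <Ax, Tx>, x in M_T, contain short segments from any value towards any other
   one (a local Toeplitz-Hausdorff argument); at a minimiser y, the direction
   mu = - conj <Ay, Ty> then yields a value of smaller modulus unless
   <Ay, Ty> = 0.  The converse is ||Tx + l Ax||^2 = 1 + |l|^2 ||Ax||^2 when
   x is in M_T and <Ax, Tx> = 0. *)

From HB Require Import structures.
From mathcomp Require Import all_boot all_order all_algebra.
From mathcomp Require Import boolp classical_sets reals.
From mathcomp Require Import complex.
From mathcomp Require Import ring lra.
Set Implicit Arguments.
Unset Strict Implicit.
Unset Printing Implicit Defensive.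
Import Order.TTheory GRing.Theory Num.Theory.
Import Normc.
Local Open Scope ring_scope.
Local Open Scope classical_set_scope.
Local Open Scope complex_scope.
Local Notation Re := complex.Re.
Local Notation Im := complex.Im.

Section ComplexModulus.
Variable R : realType.
Implicit Types (z w : R[i]) (r : R).

(* Stated for [conjc] itself: the library's rmorphism lemmas simplify it to
   [Num.conj], which no longer matches the conjugation in the definitions. *)
Lemma conjcD z w : conjc (z + w) = conjc z + conjc w.
Proof. by case: z => a b; case: w => c d /=; congr Complex; ring. Qed.

Lemma conjcM z w : conjc (z * w) = conjc z * conjc w.
Proof. by case: z => a b; case: w => c d /=; congr Complex; ring. Qed.

Lemma conjcN z : conjc (- z) = - conjc z.
Proof. by case: z. Qed.

Lemma conjcR r : conjc r%:C = r%:C.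
Proof. by rewrite /= oppr0. Qed.

Lemma realcM r s : r%:C * s%:C = (r * s)%:C.
Proof. by rewrite -rmorphM. Qed.

Lemma realcD r s : r%:C + s%:C = (r + s)%:C.
Proof. by rewrite -rmorphD. Qed.

Lemma complex_Im0 z : Im z = 0 -> z = (Re z)%:C.
Proof. by case: z => a b /= ->. Qed.

Lemma Im_conjM_add g z w : Im (conjc g * z + g * w) = Im (conjc g * (z - conjc w)).
Proof. by case: g => a b; case: z => c d; case: w => e f /=; ring. Qed.

Lemma ReJ z : Re (conjc z) = Re z.
Proof. by case: z. Qed.

Lemma ReRM r z : Re (r%:C * z) = r * Re z.
Proof. by case: z => a b /=; rewrite mul0r subr0. Qed.

Lemma ReJM z w : Re (conjc z * w) = Re z * Re w + Im z * Im w.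
Proof. by case: z => a b; case: w => c d /=; ring. Qed.

Lemma normc_sqr z : normc z ^+ 2 = Re z ^+ 2 + Im z ^+ 2.
Proof. by case: z => a b; rewrite sqr_sqrtr // addr_ge0 ?sqr_ge0. Qed.

Lemma normc_ge0 z : 0 <= normc z.
Proof. by case: z => a b; apply: sqrtr_ge0. Qed.

Lemma normc_gt0 z : z != 0 -> 0 < normc z.
Proof.
by move=> z0; rewrite lt_def normc_ge0 andbT; apply: contra z0 => /eqP/eq0_normc ->.
Qed.

Lemma normc_real r : normc r%:C = `|r|.
Proof. by rewrite /= expr0n addr0 sqrtr_sqr. Qed.

Lemma normcJ z : normc (conjc z) = normc z.
Proof. by case: z => a b; rewrite /= sqrrN. Qed.

Lemma mulcJ z : z * conjc z = (normc z ^+ 2)%:C.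
Proof.
rewrite normc_sqr; case: z => a b; apply/eqP; rewrite eq_complex /=.
by apply/andP; split; apply/eqP; ring.
Qed.

Lemma Re_le_normc z : Re z <= normc z.
Proof.
apply: le_trans (ler_norm _) _; rewrite -sqrtr_sqr -[normc z]ger0_norm ?normc_ge0 //.
by rewrite -sqrtr_sqr ler_sqrt ?sqr_ge0 // normc_sqr lerDl sqr_ge0.
Qed.

Lemma normc_addr_real z w r :
  normc (z + r%:C * w) ^+ 2 =
    normc z ^+ 2 + 2 * r * Re (conjc z * w) + r ^+ 2 * normc w ^+ 2.
Proof. by rewrite !normc_sqr ReJM; case: z => a b; case: w => c d /=; ring. Qed.

Lemma normc_addr_real_lt z w r : Re (conjc z * w) <= - normc z ^+ 2 ->
  0 < r -> r * normc w ^+ 2 < normc z ^+ 2 -> normc (z + r%:C * w) < normc z.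
Proof.
move=> Re_le r_gt0 rw_lt; rewrite -ltr_sqr ?nnegrE ?normc_ge0 // normc_addr_real.
have : 0 <= r * normc w ^+ 2 by rewrite mulr_ge0 ?sqr_ge0 ?ltW.
have := ler_wpM2l (ltW r_gt0) Re_le; nra.
Qed.

Lemma unit_rotation z : exists g, normc g = 1 /\ Im (conjc g * z) = 0.
Proof.
have [->|z0] := eqVneq z 0; first by exists 1; rewrite normc1 mulr0.
exists ((normc z)^-1%:C * z); split.
  rewrite normcM normc_real ger0_norm ?invr_ge0 ?normc_ge0 //.
  by rewrite mulVf // gt_eqF // normc_gt0.
by rewrite conjcM conjcR -mulrA [conjc _ * z]mulrC mulcJ /=; ring.
Qed.
End ComplexModulus.

Section InnerProductSpace.
Variables (R : realType) (V : lmodType R[i]) (ip : V -> V -> R[i]).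
Hypothesis ipP : is_inner_product ip.
Implicit Types (x y z : V) (a : R[i]).
Local Notation "`‖ x ‖" := (ipnorm ip x) (at level 0, x at level 99, format "`‖ x ‖").

Lemma ipAl a x y z : ip (a *: x + y) z = a * ip x z + ip y z.
Proof. by case: ipP. Qed.

Lemma ip_conj x y : ip y x = conjc (ip x y).
Proof. by case: ipP. Qed.

Lemma ip0l z : ip 0 z = 0.
Proof.
have := ipAl 1 0 0 z; rewrite scale1r addr0 mul1r => h.
by apply: (addrI (ip 0 z)); rewrite addr0 -h.
Qed.

Lemma ipDl x y z : ip (x + y) z = ip x z + ip y z.
Proof. by rewrite -[x in LHS]scale1r ipAl mul1r. Qed.

Lemma ipZl a x z : ip (a *: x) z = a * ip x z.
Proof. by rewrite -[_ *: x]addr0 ipAl ip0l addr0. Qed.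

Lemma ipNl x z : ip (- x) z = - ip x z.
Proof. by rewrite -scaleN1r ipZl mulN1r. Qed.

Lemma ipBl x y z : ip (x - y) z = ip x z - ip y z.
Proof. by rewrite ipDl ipNl. Qed.

Lemma ip0r z : ip z 0 = 0.
Proof. by rewrite ip_conj ip0l conjc0. Qed.

Lemma ipDr x y z : ip z (x + y) = ip z x + ip z y.
Proof. by rewrite ip_conj ipDl conjcD -!ip_conj. Qed.

Lemma ipZr a x z : ip z (a *: x) = conjc a * ip z x.
Proof. by rewrite ip_conj ipZl conjcM -ip_conj. Qed.

Lemma ipBr x y z : ip z (x - y) = ip z x - ip z y.
Proof. by rewrite ip_conj ipBl conjcD conjcN -!ip_conj. Qed.

Lemma ipnorm_ge0 x : 0 <= `‖ x ‖.
Proof. exact: sqrtr_ge0. Qed.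

Lemma ipnorm_sqr x : `‖ x ‖ ^+ 2 = Re (ip x x).
Proof. by rewrite sqr_sqrtr //; case: ipP => _ _ /(_ x) []. Qed.

Lemma ip_self x : ip x x = (`‖ x ‖ ^+ 2)%:C.
Proof.
rewrite ipnorm_sqr; case: ipP => _ _ /(_ x) [_ Im0] _.
by case: (ip x x) Im0 => a b /= ->.
Qed.

Lemma ipnorm_eq0 x : `‖ x ‖ = 0 -> x = 0.
Proof. by move=> hx; case: ipP => _ _ _; apply; rewrite ip_self hx expr0n. Qed.

Lemma ipnorm0 : `‖ 0 ‖ = 0.
Proof. by rewrite /ipnorm ip0l sqrtr0. Qed.

Lemma ipnormD_sqr x y : `‖ x + y ‖ ^+ 2 = `‖ x ‖ ^+ 2 + `‖ y ‖ ^+ 2 + 2 * Re (ip x y).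
Proof. by rewrite !ipnorm_sqr ipDl !ipDr !raddfD /= [ip y x]ip_conj ReJ; ring. Qed.

Lemma ipNr x z : ip z (- x) = - ip z x.
Proof. by rewrite -scaleN1r ipZr conjcN conjc1 mulN1r. Qed.

Lemma ipnormZ a x : `‖ a *: x ‖ = normc a * `‖ x ‖.
Proof.
rewrite {1}/ipnorm ipZl ipZr mulrA mulcJ ip_self realcM /=.
by rewrite -exprMn sqrtr_sqr ger0_norm // mulr_ge0 ?normc_ge0 ?ipnorm_ge0.
Qed.

Lemma ipnormN x : `‖ - x ‖ = `‖ x ‖.
Proof. by rewrite -scaleN1r ipnormZ normcN normc1 mul1r. Qed.

Lemma ipnormB_sqr x y : `‖ x - y ‖ ^+ 2 = `‖ x ‖ ^+ 2 + `‖ y ‖ ^+ 2 - 2 * Re (ip x y).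
Proof. by rewrite ipnormD_sqr ipnormN ipNr raddfN /= mulrN. Qed.

Lemma parallelogram x y :
  `‖ x + y ‖ ^+ 2 + `‖ x - y ‖ ^+ 2 = 2 * `‖ x ‖ ^+ 2 + 2 * `‖ y ‖ ^+ 2.
Proof. by rewrite ipnormD_sqr ipnormB_sqr; ring. Qed.

Lemma Cauchy_Schwarz x y : normc (ip x y) <= `‖ x ‖ * `‖ y ‖.
Proof.
have [y0|y0] := eqVneq `‖ y ‖ 0.
  by rewrite (ipnorm_eq0 y0) ip0r normc0 ipnorm0 mulr0.
set N := `‖ y ‖ ^+ 2; set p := ip x y.
have N_gt0 : 0 < N by rewrite exprn_gt0 // lt_def y0 ipnorm_ge0.
(* the projection coefficient of x on y *)
have : 0 <= `‖ x - (N^-1%:C * p) *: y ‖ ^+ 2 by apply: sqr_ge0.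
rewrite ipnormB_sqr ipnormZ ipZr -/p conjcM conjcR -mulrA [conjc p * p]mulrC mulcJ.
rewrite realcM /= normcM normc_real ger0_norm ?invr_ge0 ?(ltW N_gt0) // !exprMn -/N.
have -> : N^-1 ^+ 2 * normc p ^+ 2 * N = N^-1 * normc p ^+ 2 by field; rewrite gt_eqF.
move=> h; have : N^-1 * normc p ^+ 2 <= `‖ x ‖ ^+ 2 by lra.
rewrite mulrC ler_pdivrMr // => hp.
by rewrite -ler_sqr ?nnegrE ?normc_ge0 ?mulr_ge0 ?ipnorm_ge0 // exprMn.
Qed.

Lemma Re_ip_le x y : Re (ip x y) <= `‖ x ‖ * `‖ y ‖.
Proof. exact: le_trans (Re_le_normc _) (Cauchy_Schwarz x y). Qed.

Lemma ipnormD x y : `‖ x + y ‖ <= `‖ x ‖ + `‖ y ‖.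
Proof.
rewrite -ler_sqr ?nnegrE ?addr_ge0 ?ipnorm_ge0 // ipnormD_sqr sqrrD.
by have := Re_ip_le x y; lra.
Qed.

Lemma ipnorm_distC x y : `‖ x - y ‖ = `‖ y - x ‖.
Proof. by rewrite -ipnormN opprB. Qed.

Lemma ipnorm_lerB_dist x y : `‖ x ‖ - `‖ y ‖ <= `‖ x - y ‖.
Proof. by have := ipnormD (x - y) y; rewrite subrK; lra. Qed.
End InnerProductSpace.

Section LinearOperator.
Variables (R : realType) (V1 V2 : lmodType R[i]) (L : V1 -> V2).
Hypothesis linL : is_linear_op L.

Lemma linop0 : L 0 = 0.
Proof.
have := linL 1 0 0; rewrite scale1r addr0 scale1r => h.
by apply: (addrI (L 0)); rewrite addr0 -h.
Qed.

Lemma linopD x y : L (x + y) = L x + L y.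
Proof. by rewrite -[x in LHS]scale1r linL scale1r. Qed.

Lemma linopZ a x : L (a *: x) = a *: L x.
Proof. by rewrite -[a *: x]addr0 linL linop0 addr0. Qed.

Lemma linopN x : L (- x) = - L x.
Proof. by rewrite -scaleN1r linopZ scaleN1r. Qed.

Lemma linopB x y : L (x - y) = L x - L y.
Proof. by rewrite linopD linopN. Qed.

End LinearOperator.

Lemma opnorm_neq0_sphere (R : realType) (V1 V2 : lmodType R[i])
    (ip1 : V1 -> V1 -> R[i]) (ip2 : V2 -> V2 -> R[i]) (L : V1 -> V2) :
  opnorm ip1 ip2 L != 0 -> exists u, ipnorm ip1 u = 1.
Proof.
apply: contraNP => no_u; rewrite /opnorm.
suff -> : [set ipnorm ip2 (L x) | x in [set x | ipnorm ip1 x = 1]] = set0 by rewrite sup0.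
by apply/seteqP; split=> // r [x x1 _]; apply: no_u; exists x.
Qed.

Section OperatorNorm.
Variables (R : realType) (V1 V2 : lmodType R[i]).
Variables (ip1 : V1 -> V1 -> R[i]) (ip2 : V2 -> V2 -> R[i]).
Hypotheses (ip1P : is_inner_product ip1) (ip2P : is_inner_product ip2).
Hypothesis unit_sphere_n0 : exists u, ipnorm ip1 u = 1.
Local Notation "`‖ x ‖_1" := (ipnorm ip1 x) (at level 0, x at level 99, format "`‖ x ‖_1").
Local Notation "`‖ x ‖_2" := (ipnorm ip2 x) (at level 0, x at level 99, format "`‖ x ‖_2").
Local Notation opnorm := (opnorm ip1 ip2).
Local Notation bounded := (bounded_op ip1 ip2).
Implicit Types (L : V1 -> V2) (x : V1).

Lemma opnorm_ub L x : bounded L -> `‖ x ‖_1 = 1 -> `‖ L x ‖_2 <= opnorm L.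
Proof.
case=> _ [M hM] x1; apply: ub_le_sup; last by exists x.
by exists M => _ [y /= y1 <-]; have := hM y; rewrite y1 mulr1.
Qed.

Lemma opnorm_ge0 L : bounded L -> 0 <= opnorm L.
Proof.
move=> bL; have [u u1] := unit_sphere_n0.
exact: le_trans (ipnorm_ge0 ip2 _) (opnorm_ub bL u1).
Qed.

Lemma opnorm_bound L x : bounded L -> `‖ L x ‖_2 <= opnorm L * `‖ x ‖_1.
Proof.
move=> bL; have [x0|x0] := eqVneq `‖ x ‖_1 0.
  by rewrite (ipnorm_eq0 ip1P x0) (linop0 bL.1) !ipnorm0 // mulr0.
have nx_gt0 : 0 < `‖ x ‖_1 by rewrite lt_def x0 ipnorm_ge0.
have inv_ge0 : 0 <= `‖ x ‖_1^-1 by rewrite invr_ge0 ltW.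
have := @opnorm_ub L (`‖ x ‖_1^-1%:C *: x) bL.
rewrite (linopZ bL.1) (ipnormZ ip1P) (ipnormZ ip2P) normc_real ger0_norm // mulVf ?gt_eqF //.
by move/(_ erefl); rewrite mulrC ler_pdivrMr // mulrC.
Qed.

Lemma opnorm_approx L e : 0 < e ->
  exists x, `‖ x ‖_1 = 1 /\ opnorm L - e < `‖ L x ‖_2.
Proof.
move=> e_gt0; have [u u1] := unit_sphere_n0.
have : opnorm L - e < opnorm L by rewrite ltrBlDr ltrDl.
by case/sup_gt => [|_ [x x1 <-] h]; [exists `‖ L u ‖_2, u | exists x].
Qed.

Lemma bounded_opDZ L1 L2 (l : R[i]) : bounded L1 -> bounded L2 ->
  bounded (fun x => L1 x + l *: L2 x).
Proof.
move=> b1 b2; split.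
  move=> a x y; rewrite b1.1 b2.1 !scalerDr !scalerA (mulrC l a) -!addrA.
  by congr (_ + _); rewrite addrCA.
exists (opnorm L1 + normc l * opnorm L2) => x.
apply: le_trans (ipnormD ip2P _ _) _; rewrite (ipnormZ ip2P) mulrDl -mulrA.
by apply: lerD; rewrite ?opnorm_bound // ler_wpM2l ?normc_ge0 ?opnorm_bound.
Qed.

Lemma bounded_opB L1 L2 : bounded L1 -> bounded L2 -> bounded (fun x => L1 x - L2 x).
Proof.
move=> b1 b2; have := bounded_opDZ (-1) b1 b2.
by congr bounded; apply: funext => x; rewrite scaleN1r.
Qed.

Lemma compact_op0 : compact_op ip1 ip2 (fun _ => 0).
Proof.
split.
  split; first by move=> a x y; rewrite scaler0 addr0.
  by exists 0 => x; rewrite ipnorm0 // mul0r.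
move=> u _; exists id, 0; split => // e e_gt0; exists 0%N => n _.
by rewrite subrr ipnorm0.
Qed.

Lemma dist_compact_lt T c : dist_compact ip1 ip2 T < c ->
  exists2 K, compact_op ip1 ip2 K & opnorm (fun x => T x - K x) < c.
Proof.
have n0 : [set opnorm (fun x => T x - K x) | K in [set K | compact_op ip1 ip2 K]] !=set0.
  by exists (opnorm (fun x => T x - 0)), (fun _ => 0) => //; apply: compact_op0.
by case/(inf_lt n0) => _ [K cK <-]; exists K.
Qed.
End OperatorNorm.

Definition eventually (P : nat -> Prop) := exists N, forall n, (N <= n)%N -> P n.

Definition increasing (phi : nat -> nat) := forall n, (phi n < phi n.+1)%N.

Lemma increasing_ge phi : increasing phi -> forall n, (n <= phi n)%N.
Proof. by move=> phi_incr; elim=> [|n IHn] //; exact: leq_ltn_trans IHn (phi_incr n). Qed.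

Lemma eventually_and (P Q : nat -> Prop) :
  eventually P -> eventually Q -> eventually (fun n => P n /\ Q n).
Proof.
move=> [M PM] [N QN]; exists (maxn M N) => n; rewrite geq_max => /andP[Mn Nn].
by split; [apply: PM | apply: QN].
Qed.

Lemma eventually_mono (P Q : nat -> Prop) :
  (forall n, P n -> Q n) -> eventually P -> eventually Q.
Proof. by move=> PQ [N PN]; exists N => n /PN /PQ. Qed.

Lemma eventually_subseq phi (P : nat -> Prop) :
  increasing phi -> eventually P -> eventually (fun n => P (phi n)).
Proof.
move=> phi_incr [N PN]; exists N => n Nn; apply: PN.
exact: leq_trans Nn (increasing_ge phi_incr n).
Qed.

Lemma eventually_div_lt (R : realType) (C e : R) : 0 < e ->
  eventually (fun n => C / n.+1%:R < e).
Proof.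
move=> e_gt0; exists (Num.Def.archi_bound (e^-1 * `|C|)) => n bn.
apply: le_lt_trans (ler_norm _) _; rewrite normrM normfV normr_nat.
rewrite ltr_pdivrMr ?ltr0Sn // -ltr_pdivrMl //.
apply: lt_le_trans (archi_boundP _) _; first by rewrite mulr_ge0 // invr_ge0 ltW.
by rewrite ler_nat leqW.
Qed.

Lemma real_sign_align (R : realDomainType) (c W : R) : 0 <= c ->
  exists s, `|s| = c /\ s * W = c * `|W|.
Proof.
move=> c_ge0; have [W_ge0|W_lt0] := leP 0 W.
  by exists c; split; rewrite ger0_norm.
by exists (- c); split; [rewrite normrN ger0_norm | rewrite ltr0_norm // mulrN mulNr].
Qed.

Lemma eventually_ex (P : nat -> Prop) : eventually P -> exists n, P n.
Proof. by move=> [N PN]; exists N; apply: PN. Qed.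

Section LipschitzLimit.
Variables (R : realType) (V : lmodType R[i]) (ip : V -> V -> R[i]).

Lemma lipschitz_limit_le (F : V -> R) (k b : R) (u : nat -> V) y : 0 <= k ->
  (forall n, F y <= F (u n) + k * ipnorm ip (u n - y)) -> converges_to ip u y ->
  (forall e, 0 < e -> eventually (fun n => F (u n) <= b + e)) -> F y <= b.
Proof.
move=> k_ge0 F_lip u_y F_ev; apply/ler_addgt0Pr => e e_gt0.
have d_gt0 : 0 < e / (2 * (k + 1)) by rewrite divr_gt0 // mulr_gt0 //; lra.
have e2_gt0 : 0 < e / 2 by lra.
have [n [un Fun]] := eventually_ex (eventually_and (u_y _ d_gt0) (F_ev _ e2_gt0)).
have kd : k * (e / (2 * (k + 1))) <= e / 2.
  by rewrite mulrA ler_pdivrMr ?mulr_gt0 //; lra.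
have := F_lip n; have := ler_wpM2l k_ge0 (ltW un); lra.
Qed.
End LipschitzLimit.

Section NormOneOperator.
Variables (R : realType) (V1 V2 : lmodType R[i]).
Variables (ip1 : V1 -> V1 -> R[i]) (ip2 : V2 -> V2 -> R[i]).
Hypotheses (ip1P : is_inner_product ip1) (ip2P : is_inner_product ip2).
Hypothesis unit_sphere_n0 : exists u, ipnorm ip1 u = 1.
Local Notation "`‖ x ‖_1" := (ipnorm ip1 x) (at level 0, x at level 99, format "`‖ x ‖_1").
Local Notation "`‖ x ‖_2" := (ipnorm ip2 x) (at level 0, x at level 99, format "`‖ x ‖_2").
Local Notation opnorm := (opnorm ip1 ip2).
Local Notation bounded := (bounded_op ip1 ip2).
Variable T : V1 -> V2.
Hypotheses (bT : bounded T) (normT : opnorm T = 1).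
Local Notation M_T := (norm_attaining_set ip1 ip2 T).
Implicit Types (x y u v w : V1).

Lemma norm_attainingP x : M_T x <-> `‖ x ‖_1 = 1 /\ `‖ T x ‖_2 = 1.
Proof. by rewrite /norm_attaining_set /= normT. Qed.

Lemma opnorm1_le x : `‖ T x ‖_2 <= `‖ x ‖_1.
Proof. by have := opnorm_bound ip1P ip2P x bT; rewrite normT mul1r. Qed.

Lemma opnorm1_le_sqr x : `‖ T x ‖_2 ^+ 2 <= `‖ x ‖_1 ^+ 2.
Proof. by rewrite ler_sqr ?nnegrE ?ipnorm_ge0 ?opnorm1_le. Qed.

(* Since I - T^*T >= 0, a norm attaining x lies in the kernel of I - T^*T. *)
Lemma norm_attaining_ip x w : M_T x -> ip2 (T x) (T w) = ip1 x w.
Proof.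
case/norm_attainingP => x1 Tx1; set b := ip1 x w - ip2 (T x) (T w).
suff : b = 0 by move/eqP; rewrite subr_eq0 => /eqP ->.
have key s : 0 <= `‖ w ‖_1 ^+ 2 - `‖ T w ‖_2 ^+ 2 + 2 * Re (conjc s * conjc b).
  have := opnorm1_le_sqr (w + s *: x).
  rewrite (linopD bT.1) (linopZ bT.1) (ipnormD_sqr ip1P) (ipnormD_sqr ip2P).
  rewrite (ipnormZ ip1P) (ipnormZ ip2P) x1 Tx1 (ipZr ip1P) (ipZr ip2P).
  rewrite /b conjcD conjcN -(ip_conj ip1P) -(ip_conj ip2P) mulrDr mulrN.
  by rewrite raddfD raddfN /=; lra.
have Tw_le := opnorm1_le_sqr w.
apply: eq0_normc; apply/eqP; rewrite eq_le normc_ge0 andbT leNgt; apply/negP => b_gt0.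
set r := (`‖ w ‖_1 ^+ 2 - `‖ T w ‖_2 ^+ 2 + 1) / normc b ^+ 2.
have := key (- (r%:C * conjc b)).
rewrite conjcN conjcM conjcR conjcK mulNr -mulrA mulcJ realcM raddfN /=.
by rewrite /r divfK ?gt_eqF ?exprn_gt0 //; lra.
Qed.

Lemma norm_attaining_comb x0 x1 b : M_T x0 -> M_T x1 ->
  `‖ T (x0 + b *: x1) ‖_2 = `‖ x0 + b *: x1 ‖_1.
Proof.
move=> Mx0 Mx1; set u := x0 + b *: x1.
have Tu_ip w : ip2 (T u) (T w) = ip1 u w.
  rewrite (linopD bT.1) (linopZ bT.1) (ipDl ip2P) (ipZl ip2P).
  by rewrite !norm_attaining_ip // -(ipZl ip1P) -(ipDl ip1P).
by rewrite /ipnorm Tu_ip.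
Qed.

Lemma norm_attaining_normalize u : 0 < `‖ u ‖_1 -> `‖ T u ‖_2 = `‖ u ‖_1 ->
  M_T (`‖ u ‖_1^-1%:C *: u).
Proof.
move=> u_gt0 Tu; have inv_ge0 : 0 <= `‖ u ‖_1^-1 by rewrite invr_ge0 ltW.
apply/norm_attainingP; rewrite (linopZ bT.1) (ipnormZ ip1P) (ipnormZ ip2P).
by rewrite normc_real ger0_norm // Tu mulVf ?gt_eqF.
Qed.

Lemma sphere_dist_sqr_le K u v : bounded K -> `‖ u ‖_1 = 1 -> `‖ v ‖_1 = 1 ->
  `‖ u - v ‖_1 ^+ 2 <= 4 - 2 * `‖ T u ‖_2 ^+ 2 - 2 * `‖ T v ‖_2 ^+ 2
     + (`‖ K u - K v ‖_2 + opnorm (fun x => T x - K x) * `‖ u - v ‖_1) ^+ 2.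
Proof.
move=> bK u1 v1.
have T_uv : `‖ T (u - v) ‖_2 <=
    `‖ K u - K v ‖_2 + opnorm (fun x => T x - K x) * `‖ u - v ‖_1.
  have -> : T (u - v) = (K u - K v) + (T (u - v) - K (u - v)).
    by rewrite (linopB bK.1) addrCA subrr addr0.
  apply: le_trans (ipnormD ip2P _ _) _; rewrite lerD2l.
  exact: (opnorm_bound ip1P ip2P (u - v) (bounded_opB ip1P ip2P bT bK)).
have := ipnorm_ge0 ip2 (T (u - v)).
have := parallelogram ip1P u v; have := parallelogram ip2P (T u) (T v).
rewrite -(linopD bT.1) -(linopB bT.1) u1 v1.
have := opnorm1_le_sqr (u + v); nra.
Qed.

Definition norming_seq (x : nat -> V1) : Prop :=
  (forall n, `‖ x n ‖_1 = 1) /\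
  forall e : R, 0 < e -> eventually (fun n => 1 - e < `‖ T (x n) ‖_2).

Lemma norming_seq_subseq (x : nat -> V1) phi : increasing phi -> norming_seq x ->
  norming_seq (fun n => x (phi n)).
Proof. by move=> phi_incr [x1 Tx1]; split=> // e /Tx1; apply: eventually_subseq. Qed.

Lemma norming_seq_limit (x : nat -> V1) y :
  norming_seq x -> converges_to ip1 x y -> M_T y.
Proof.
move=> [x1 Tx1] x_y.
have y_le1 : `‖ y ‖_1 <= 1.
  apply: (lipschitz_limit_le (F := ipnorm ip1) (k := 1) _ _ x_y) => // [n|e e_gt0].
    by rewrite mul1r (ipnorm_distC ip1P); have := ipnorm_lerB_dist ip1P y (x n); lra.
  by exists 0%N => n _; rewrite x1 lerDl ltW.
have Ty_ge1 : - `‖ T y ‖_2 <= - 1.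
  apply: (lipschitz_limit_le (F := fun z => - `‖ T z ‖_2) (k := 1) _ _ x_y) => // [n|e e_gt0].
    have := ipnorm_lerB_dist ip2P (T (x n)) (T y); rewrite -(linopB bT.1).
    by have := opnorm1_le (x n - y); lra.
  by apply: eventually_mono (Tx1 e e_gt0) => n; lra.
by apply/norm_attainingP; have := opnorm1_le y; split; lra.
Qed.

Lemma bj_orth_of_attaining_ortho A x : bounded A -> M_T x -> ip2 (A x) (T x) = 0 ->
  bj_orth ip1 ip2 T A.
Proof.
move=> bA Mx qx0 l; have [x1 Tx1] := (norm_attainingP x).1 Mx.
apply: le_trans (opnorm_ub (bounded_opDZ ip1P ip2P l bT bA) x1).
rewrite normT -ler_sqr ?nnegrE ?ipnorm_ge0 // expr1n (ipnormD_sqr ip2P) Tx1.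
rewrite (ipZr ip2P) (ip_conj ip2P (A x)) qx0 conjc0 mulr0 expr1n /= mulr0 addr0.
by rewrite lerDl sqr_ge0.
Qed.

Section EssentialNormLtOne.
Variable K : V1 -> V2.
Hypotheses (cK : compact_op ip1 ip2 K) (TK_lt1 : opnorm (fun x => T x - K x) < 1).
Hypothesis complete1 :
  forall s : nat -> V1, cauchy_seq ip1 s -> exists l, converges_to ip1 s l.

Lemma norming_seq_cauchy (x : nat -> V1) l : norming_seq x ->
  converges_to ip2 (fun n => K (x n)) l -> cauchy_seq ip1 x.
Proof.
move=> [x1 Tx1] Kx_l e e_gt0.
pose c := opnorm (fun x => T x - K x); have c_lt1 : c < 1 := TK_lt1.
have c_ge0 : 0 <= c by apply: opnorm_ge0 => //; apply: bounded_opB cK.1.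
have g_gt0 : 0 < (1 - c ^+ 2) * e ^+ 2 by rewrite mulr_gt0 ?exprn_gt0 // subr_gt0; nra.
set g := (1 - c ^+ 2) * e ^+ 2 in g_gt0.
pose dl := Num.min (1 / 2) (g / 20).
have dl_gt0 : 0 < dl by rewrite lt_min; apply/andP; split; lra.
have [dl_le1 dl_leg] : dl <= 1 / 2 /\ dl <= g / 20 by rewrite !ge_min !lexx ?orbT.
have g16_gt0 : 0 < g / 16 by lra.
have [N NP] := eventually_and (Kx_l _ dl_gt0) (Tx1 _ g16_gt0).
exists N => m n /NP [Km Tm] /NP [Kn Tn].
have eta_lt : `‖ K (x m) - K (x n) ‖_2 < 2 * dl.
  have -> : K (x m) - K (x n) = (K (x m) - l) - (K (x n) - l).
    by rewrite opprB addrA subrK.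
  by apply: le_lt_trans (ipnormD ip2P _ _) _; rewrite (ipnormN ip2P); lra.
have := sphere_dist_sqr_le cK.1 (x1 m) (x1 n); rewrite -/c.
have d_le2 : `‖ x m - x n ‖_1 <= 2.
  by have := ipnormD ip1P (x m) (- x n); rewrite (ipnormN ip1P) !x1; lra.
set d := `‖ x m - x n ‖_1 in d_le2 *; set eta := `‖ K (x m) - K (x n) ‖_2 in eta_lt *.
set a := `‖ T (x m) ‖_2 in Tm *; set b := `‖ T (x n) ‖_2 in Tn *.
have eta_ge0 : 0 <= eta := ipnorm_ge0 ip2 _.
have d_ge0 : 0 <= d := ipnorm_ge0 ip1 _.
(* a^2 >= 2a - 1 turns the bounds on ||T x_m||, ||T x_n|| into bounds on their squares *)
have a2 : 1 - g / 8 < a ^+ 2 by have := sqr_ge0 (a - 1); nra.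
have b2 : 1 - g / 8 < b ^+ 2 by have := sqr_ge0 (b - 1); nra.
have eta_le1 : eta <= 1 by lra.
have cd_le2 : c * d <= 2 by nra.
have eta_cd : (eta + c * d) ^+ 2 <= c ^+ 2 * d ^+ 2 + 5 * eta.
  have : eta * (c * d) <= eta * 2 by rewrite ler_wpM2l.
  by rewrite sqrrD exprMn; nra.
move=> dist_le; have : (1 - c ^+ 2) * d ^+ 2 < (1 - c ^+ 2) * e ^+ 2 by rewrite -/g; nra.
rewrite ltr_pM2l; last by rewrite subr_gt0; nra.
by rewrite ltr_sqr ?nnegrE // ltW.
Qed.

Lemma norming_seq_cvg (x : nat -> V1) : norming_seq x ->
  exists phi y, [/\ increasing phi, converges_to ip1 (fun n => x (phi n)) y & M_T y].
Proof.
move=> xn; have x_bd : exists M, forall n, `‖ x n ‖_1 <= M by exists 1 => n; rewrite xn.1.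
have [phi [l [phi_incr Kx_l]]] := cK.2 x x_bd.
have xn_phi := norming_seq_subseq phi_incr xn.
have [y x_y] := complete1 (norming_seq_cauchy xn_phi Kx_l).
by exists phi, y; split=> //; apply: norming_seq_limit xn_phi x_y.
Qed.

Section Orthogonality.
Variable A : V1 -> V2.
Hypothesis bA : bounded A.
Local Notation q x := (ip2 (A x) (T x)).
Local Notation a := (opnorm A).

Lemma opnormA_ge0 : 0 <= a. Proof. exact: (opnorm_ge0 unit_sphere_n0 bA). Qed.

Lemma q_lipschitz y z : `‖ y ‖_1 <= 1 -> `‖ z ‖_1 <= 1 ->
  normc (q z - q y) <= 2 * a * `‖ z - y ‖_1.
Proof.
move=> y1 z1.
have -> : q z - q y = ip2 (A (z - y)) (T z) + ip2 (A y) (T (z - y)).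
  by rewrite (linopB bA.1) (linopB bT.1) (ipBl ip2P) (ipBr ip2P); ring.
apply: le_trans (le_normcD _ _) _.
have := Cauchy_Schwarz ip2P (A (z - y)) (T z); have := Cauchy_Schwarz ip2P (A y) (T (z - y)).
have := opnorm_bound ip1P ip2P (z - y) bA; have := opnorm_bound ip1P ip2P y bA.
have := opnorm1_le z; have := opnorm1_le (z - y).
have := ipnorm_ge0 ip2 (A (z - y)); have := ipnorm_ge0 ip2 (T z).
have := ipnorm_ge0 ip2 (A y); have := ipnorm_ge0 ip1 (z - y); have := opnormA_ge0.
nra.
Qed.

Lemma ipnorm_perturb_sqr mu t x : normc mu = 1 -> 0 <= t ->
  `‖ T x + (t%:C * mu) *: A x ‖_2 ^+ 2 =
    `‖ T x ‖_2 ^+ 2 + t ^+ 2 * `‖ A x ‖_2 ^+ 2 + 2 * (t * Re (mu * q x)).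
Proof.
move=> mu1 t_ge0; rewrite (ipnormD_sqr ip2P) (ipnormZ ip2P) normcM normc_real mu1.
rewrite mulr1 ger0_norm // exprMn (ipZr ip2P) [ip2 (T x) _](ip_conj ip2P).
by rewrite -conjcM ReJ -[t%:C * mu * _]mulrA ReRM.
Qed.

Lemma bj_orth_approx mu t : bj_orth ip1 ip2 T A -> normc mu = 1 -> 0 < t -> t <= 1 ->
  exists x, [/\ `‖ x ‖_1 = 1, 1 - (2 + a) ^+ 2 * t <= `‖ T x ‖_2
              & - ((2 + a) ^+ 2 * t) <= Re (mu * q x)].
Proof.
move=> bjTA mu1 t_gt0 t_le1.
pose L x := T x + (t%:C * mu) *: A x.
have L_ge1 : 1 <= opnorm L by rewrite -normT; apply: bjTA.
have t2_gt0 : 0 < t ^+ 2 by rewrite exprn_gt0.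
have [x [x1 Lx]] := opnorm_approx ip2 unit_sphere_n0 L t2_gt0.
exists x; have Lx2 : 1 - 2 * t ^+ 2 <= `‖ L x ‖_2 ^+ 2.
  have t2_le1 : t ^+ 2 <= 1 by nra.
  have : (1 - t ^+ 2) ^+ 2 <= `‖ L x ‖_2 ^+ 2.
    by rewrite ler_sqr ?nnegrE ?ipnorm_ge0 ?subr_ge0 //; lra.
  nra.
rewrite /L (ipnorm_perturb_sqr x mu1 (ltW t_gt0)) in Lx2.
have Ax_le : `‖ A x ‖_2 <= a by rewrite -[a]mulr1 -x1 opnorm_bound.
have Tx_le : `‖ T x ‖_2 <= 1 by rewrite -x1 opnorm1_le.
have Re_le : Re (mu * q x) <= a.
  apply: le_trans (Re_le_normc _) _; rewrite normcM mu1 mul1r.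
  apply: le_trans (Cauchy_Schwarz ip2P _ _) _.
  by have := ipnorm_ge0 ip2 (A x); have := ipnorm_ge0 ip2 (T x); nra.
have a_ge0 := opnormA_ge0.
have tA_le : t ^+ 2 * `‖ A x ‖_2 ^+ 2 <= t ^+ 2 * a ^+ 2.
  by rewrite ler_wpM2l ?sqr_ge0 // ler_sqr ?nnegrE ?ipnorm_ge0.
have C_ge : 2 + a ^+ 2 <= (2 + a) ^+ 2 by nra.
split=> //.
  have Tx_sqr : `‖ T x ‖_2 ^+ 2 <= `‖ T x ‖_2 by have := ipnorm_ge0 ip2 (T x); nra.
  have := ler_wpM2l (ltW t_gt0) Re_le.
  have : t ^+ 2 * a ^+ 2 <= t * a ^+ 2 by apply: ler_wpM2r; [exact: sqr_ge0 | nra].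
  have : t * (2 + a) ^+ 2 = t * (2 + a ^+ 2) + 4 * (t * a) + 2 * t by ring.
  nra.
have : 0 <= t * (2 * Re (mu * q x) + t * (2 + a ^+ 2)).
  have : `‖ T x ‖_2 ^+ 2 <= 1 by have := ipnorm_ge0 ip2 (T x); nra.
  nra.
rewrite pmulr_rge0 // => Re_ge.
have := ler_wpM2l (ltW t_gt0) C_ge; have := mulr_ge0 (ltW t_gt0) (sqr_ge0 (2 + a)).
lra.
Qed.

Lemma bj_orth_halfplane_unit mu : bj_orth ip1 ip2 T A -> normc mu = 1 ->
  exists2 y, M_T y & 0 <= Re (mu * q y).
Proof.
move=> bjTA mu1; pose C := (2 + a) ^+ 2.
have approx n : exists x, [/\ `‖ x ‖_1 = 1, 1 - C / n.+1%:R <= `‖ T x ‖_2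
                               & - (C / n.+1%:R) <= Re (mu * q x)].
  apply: bj_orth_approx => //; first by rewrite invr_gt0 ltr0Sn.
  by rewrite invf_le1 ?ler1n ?ltr0Sn.
have [x xP] := choice approx.
have xn : norming_seq x.
  split=> [n|e e_gt0]; first by case: (xP n).
  apply: eventually_mono (eventually_div_lt C e_gt0) => n.
  by case: (xP n) => _ + _; move: (C / _) => t; lra.
have [phi [y [phi_incr x_y My]]] := norming_seq_cvg xn.
exists y => //; rewrite -oppr_le0.
apply: (lipschitz_limit_le (F := fun z => - Re (mu * q z)) (k := 2 * a) _ _ x_y).
- by rewrite mulr_ge0 ?opnormA_ge0.
- move=> n; have y1 : `‖ y ‖_1 <= 1 by rewrite My.1.
  have z1 : `‖ x (phi n) ‖_1 <= 1 by case: (xP (phi n)) => ->.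
  have := q_lipschitz y1 z1; have := Re_le_normc (mu * (q (x (phi n)) - q y)).
  by rewrite normcM mu1 mul1r mulrBr raddfB /=; lra.
- move=> e e_gt0.
  apply: eventually_mono (eventually_subseq phi_incr (eventually_div_lt C e_gt0)) => n.
  by case: (xP (phi n)) => _ _; move: (C / _) => t; lra.
Qed.

Lemma bj_orth_halfplane mu : bj_orth ip1 ip2 T A -> mu != 0 ->
  exists2 y, M_T y & 0 <= Re (mu * q y).
Proof.
move=> bjTA mu0; have mu_gt0 := normc_gt0 mu0.
have nu1 : normc ((normc mu)^-1%:C * mu) = 1.
  by rewrite normcM normc_real ger0_norm ?invr_ge0 ?ltW // mulVf ?gt_eqF.
have [y My] := bj_orth_halfplane_unit bjTA nu1.
by rewrite -mulrA ReRM pmulr_rge0 ?invr_gt0 //; exists y.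
Qed.

Lemma q_minimizer : (exists x, M_T x) ->
  exists2 y, M_T y & forall x, M_T x -> normc (q y) <= normc (q x).
Proof.
move=> [x0 Mx0]; pose S := [set normc (q x) | x in M_T].
have S_n0 : S !=set0 by exists (normc (q x0)), x0.
have S_lb : lbound S (inf S) by apply: ge_inf; exists 0 => _ [x _ <-]; apply: normc_ge0.
have approx n : exists x, M_T x /\ normc (q x) < inf S + 1 / n.+1%:R.
  have : inf S < inf S + 1 / n.+1%:R by rewrite ltrDl divr_gt0 ?ltr0Sn.
  by case/(inf_lt S_n0) => _ [x Mx <-]; exists x.
have [x xP] := choice approx.
have xn : norming_seq x.
  split=> [n|e e_gt0]; first by case: (xP n) => -[].
  by exists 0%N => n _; case: (xP n) => -[_ ->] _; rewrite normT; lra.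
have [phi [y [phi_incr x_y My]]] := norming_seq_cvg xn.
exists y => // z Mz; apply: le_trans (S_lb _ (ex_intro2 _ _ z Mz erefl)).
apply: (lipschitz_limit_le (F := fun z => normc (q z)) (k := 2 * a) _ _ x_y).
- by rewrite mulr_ge0 ?opnormA_ge0.
- move=> n; have y1 : `‖ y ‖_1 <= 1 by rewrite My.1.
  have z1 : `‖ x (phi n) ‖_1 <= 1 by case: (xP (phi n)) => -[->].
  have := q_lipschitz y1 z1; have := le_normcD (q (x (phi n))) (q y - q (x (phi n))).
  by rewrite addrC subrK -[normc (q y - _)]normcN opprB; lra.
- move=> e e_gt0.
  apply: eventually_mono (eventually_subseq phi_incr (eventually_div_lt 1 e_gt0)) => n.
  by case: (xP (phi n)) => _; move: (1 / _) => t; lra.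
Qed.

Lemma q_scale r u : q (r%:C *: u) = (r ^+ 2)%:C * q u.
Proof.
by rewrite (linopZ bA.1) (linopZ bT.1) (ipZl ip2P) (ipZr ip2P) conjcR mulrA realcM.
Qed.

Lemma q_comb y x1 b : M_T y -> M_T x1 ->
  q (y + b *: x1) - q y * ip1 (y + b *: x1) (y + b *: x1) =
    conjc b * (ip2 (A y) (T x1) - q y * ip1 y x1)
    + b * (ip2 (A x1) (T y) - q y * conjc (ip1 y x1)) + b * conjc b * (q x1 - q y).
Proof.
move=> [y1 _] [x1_1 _].
have yy : ip1 y y = 1 by rewrite (ip_self ip1P) y1 expr1n.
have xx : ip1 x1 x1 = 1 by rewrite (ip_self ip1P) x1_1 expr1n.
rewrite (linopD bA.1) (linopD bT.1) (linopZ bA.1) (linopZ bT.1).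
rewrite (ipDl ip2P) !(ipDr ip2P) !(ipZl ip2P) !(ipZr ip2P).
rewrite (ipDl ip1P) !(ipDr ip1P) !(ipZl ip1P) !(ipZr ip1P) yy xx [ip1 x1 y](ip_conj ip1P).
ring.
Qed.

Lemma q_comb_rotate y x1 : M_T y -> M_T x1 -> q x1 != q y ->
  exists g W, normc g = 1 /\ forall s : R,
    let u := y + (s%:C * g) *: x1 in
    q u - q y * ip1 u u = (q x1 - q y) * (s * W + s ^+ 2)%:C.
Proof.
move=> My Mx1; rewrite -subr_eq0 => D0; set D := q x1 - q y in D0 *.
set P := (ip2 (A y) (T x1) - q y * ip1 y x1) / D.
set Q := (ip2 (A x1) (T y) - q y * conjc (ip1 y x1)) / D.
have [g [g1 Im0]] := unit_rotation (P - conjc Q).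
have wE : conjc g * P + g * Q = (Re (conjc g * P + g * Q))%:C.
  by apply: complex_Im0; rewrite Im_conjM_add.
exists g, (Re (conjc g * P + g * Q)); split=> // s u.
rewrite q_comb // conjcM conjcR -[_ - q y * ip1 y x1](divfK D0) -/P.
rewrite -[_ - q y * conjc _](divfK D0) -/Q.
have gg : s%:C * g * (s%:C * conjc g) = s%:C * s%:C.
  by rewrite mulrACA mulcJ g1 expr1n mulr1.
by rewrite gg -/D expr2 -realcD -!realcM -wE; ring.
Qed.

(* T is isometric on span {y, x1}, so the values of q along the normalised
   points of that plane behave like a 2x2 numerical range (Toeplitz-Hausdorff). *)
Lemma q_segment y x1 e : M_T y -> M_T x1 -> q x1 != q y -> 0 < e ->
  exists2 u, M_T u & exists2 r, 0 < r < e & q u = q y + r%:C * (q x1 - q y).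
Proof.
move=> My Mx1 D0 e_gt0; have [g [W [g1 comb]]] := q_comb_rotate My Mx1 D0.
have W1_gt0 : 0 < `|W| + 1 by rewrite ltr_pwDr ?normr_ge0.
pose sig := Num.min (1 / 2) (e / 8 / (`|W| + 1)).
have sig_gt0 : 0 < sig.
  by rewrite lt_min; apply/andP; split; [lra | rewrite !divr_gt0].
have [sig_le1 sig_le] : sig <= 1 / 2 /\ sig * (`|W| + 1) <= e / 8.
  by rewrite -ler_pdivlMr // !ge_min !lexx ?orbT.
have [s [s_abs sW]] := real_sign_align W (ltW sig_gt0).
have s2 : s ^+ 2 = sig ^+ 2 by rewrite -s_abs real_normK ?num_real.
have b_abs : normc (s%:C * g) = sig by rewrite normcM g1 mulr1 normc_real.
set u := y + (s%:C * g) *: x1.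
have u_ge : 1 / 2 <= `‖ u ‖_1.
  have := ipnormD ip1P u (- ((s%:C * g) *: x1)).
  by rewrite (ipnormN ip1P) (ipnormZ ip1P) b_abs Mx1.1 /u addrK My.1; lra.
have u_gt0 : 0 < `‖ u ‖_1 by lra.
exists (`‖ u ‖_1^-1%:C *: u).
  exact: norm_attaining_normalize u_gt0 (norm_attaining_comb _ My Mx1).
set N := `‖ u ‖_1 ^+ 2; have N_ge : 1 / 4 <= N by rewrite /N; nra.
have r0_gt0 : 0 < sig * `|W| + sig ^+ 2.
  by have := mulr_ge0 (ltW sig_gt0) (normr_ge0 W); nra.
have N_gt0 : 0 < N by lra.
exists ((sig * `|W| + sig ^+ 2) / N).
  apply/andP; split; first by rewrite divr_gt0.
  by rewrite ltr_pdivrMr //; nra.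
rewrite q_scale -[q u](subrK (q y * ip1 u u)) comb sW s2 (ip_self ip1P) exprVn -/N.
have NN : N^-1%:C * N%:C = 1 by rewrite realcM mulVf ?gt_eqF.
set D := q x1 - q y.
by rewrite -[q y in RHS]mulr1 -NN -[(_ / N)%:C]realcM; ring.
Qed.

Lemma attaining_ortho_of_bj_orth : bj_orth ip1 ip2 T A -> exists2 x, M_T x & q x = 0.
Proof.
move=> bjTA; have [x0 Mx0 _] := bj_orth_halfplane bjTA (oner_neq0 _).
have [y My y_min] := q_minimizer (ex_intro _ x0 Mx0).
have [qy0|q0] := eqVneq (q y) 0; first by exists y.
have q_gt0 := normc_gt0 q0.
have mu0 : - conjc (q y) != 0.
  by apply/eqP => /(congr1 (@normc _)); rewrite normcN normcJ normc0; lra.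
(* the halfplane in direction - conj (q y) faces the origin *)
have [x1 Mx1] := bj_orth_halfplane bjTA mu0.
rewrite mulNr raddfN /= oppr_ge0 => Re_le0.
have Re_le : Re (conjc (q y) * (q x1 - q y)) <= - normc (q y) ^+ 2.
  by rewrite mulrBr raddfB /= [conjc _ * q y]mulrC mulcJ /=; lra.
have D0 : q x1 != q y.
  by apply: contraTneq Re_le => ->; rewrite subrr mulr0 /= -ltNge oppr_lt0 exprn_gt0.
have eps_gt0 : 0 < normc (q y) ^+ 2 / normc (q x1 - q y) ^+ 2.
  by rewrite divr_gt0 ?exprn_gt0 // normc_gt0 // subr_eq0.
have [u Mu [r /andP[r_gt0 r_lt] qu]] := q_segment My Mx1 D0 eps_gt0.
have := y_min u Mu; rewrite qu leNgt normc_addr_real_lt //.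
by rewrite -ltr_pdivlMr // exprn_gt0 // normc_gt0 // subr_eq0.
Qed.

End Orthogonality.
End EssentialNormLtOne.
End NormOneOperator.

Theorem theorem2p3 (R : realType)
    (V1 V2 : lmodType R[i])
    (ip1 : V1 -> V1 -> R[i]) (ip2 : V2 -> V2 -> R[i])
    (H1 : is_hilbert ip1) (H2 : is_hilbert ip2)
    (T : V1 -> V2) (hT : bounded_op ip1 ip2 T)
    (hnT : opnorm ip1 ip2 T = 1)
    (hdist : dist_compact ip1 ip2 T < 1) :
  forall A : V1 -> V2, bounded_op ip1 ip2 A ->
    (bj_orth ip1 ip2 T A <->
     exists2 x, x \in norm_attaining_set ip1 ip2 T & ip2 (A x) (T x) = 0).
Proof.
have [[ip1P complete1] [ip2P _]] := (H1, H2).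
have sphere_n0 : exists u, ipnorm ip1 u = 1.
  by apply: (@opnorm_neq0_sphere _ _ _ ip1 ip2 T); rewrite hnT oner_neq0.
have [K cK TK_lt1] := dist_compact_lt ip2P hdist.
move=> A bA; split.
  move=> bjTA; have [x Mx qx0] := attaining_ortho_of_bj_orth ip1P ip2P sphere_n0 hT hnT
                                      cK TK_lt1 complete1 bA bjTA.
  by exists x; rewrite ?inE.
by case=> x; rewrite inE => Mx; apply: bj_orth_of_attaining_ortho.
Qed.
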